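(* For every first-order formula $\varphi$ of the language of group theory and every evaluation $e:\{x_1,x_2,\dots\}\to\mathbb N$ of its variables, the set $\mathcal S_{\varphi[e]}=\{G\in\mathcal G:\ \overline G\models\varphi[e]\}$ is Borel in $\mathcal G$. Consequently, if $\varphi$ is a sentence, then $\mathcal S_\varphi$ is either meager or comeager in $\mathcal G$.
   Context: Let $\mathbb N=\{1,2,3,\dots\}$. Equip $\mathbb N^{\mathbb N\times\mathbb N}$ with the product topology of the discrete topology on $\mathbb N$. Let $\mathcal G$ be the subspace consisting of those $A\in\mathbb N^{\mathbb N\times\mathbb N}$ that are the multiplication table of a group on the underlying set $\mathbb N$ whose identity element is $1$. For $G\in\mathcal G$, $\overline G$ denotes the group on $\mathbb N$ with multiplication table $G$. The language of group theory has a binary function symbol (multiplication) and a constant symbol $1$, with variables $x_1,x_2,\dots$; $\overline G\models\varphi[e]$ means $\varphi$ is true in $\overline G$ under the variable assignment $e$. *)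

From HB Require Import structures.
From mathcomp Require Import all_boot all_order all_algebra.
From mathcomp Require Import all_classical all_reals.
From mathcomp Require Import topology function_spaces subtype_topology
  discrete_topology measurable_structure.

Set Implicit Arguments.
Unset Strict Implicit.
Unset Printing Implicit Defensive.

Local Open Scope classical_set_scope.

Definition Npos : Type := {n : nat | (0 < n)%N}.
HB.instance Definition _ := Choice.on Npos.

Definition one : Npos := exist (fun n => (0 < n)%N) 1%N isT.

Definition Ndisc : topologicalType := discrete_topology Npos.

Definition Tables : topologicalType := {ptws (Npos * Npos)%type -> Ndisc}.

Definition is_group_table (A : Npos * Npos -> Npos) : Prop :=
  [/\ (forall x y z : Npos, A (A (x, y), z) = A (x, A (y, z))),
      (forall x : Npos, A (one, x) = x /\ A (x, one) = x)
    & (forall x : Npos, exists y : Npos, A (x, y) = one /\ A (y, x) = one)].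

Definition group_tables : set Tables := [set A | is_group_table A].

Definition GSpace : topologicalType := set_type group_tables.

Definition gmul (G : GSpace) (x y : Npos) : Npos := (set_val G : Tables) (x, y).

(** First-order language of group theory: binary multiplication, constant 1.
    Variables x_1, x_2, ... are indexed by nat (index i stands for x_(i+1)). *)
Inductive term : Type :=
| Tvar : nat -> term
| Tone : term
| Tmul : term -> term -> term.

Inductive formula : Type :=
| Feq : term -> term -> formula
| Ffalse : formula
| Fnot : formula -> formula
| Fand : formula -> formula -> formula
| For : formula -> formula -> formula
| Fimp : formula -> formula -> formula
| Fforall : nat -> formula -> formula
| Fexists : nat -> formula -> formula.

Fixpoint term_eval (G : GSpace) (e : nat -> Npos) (t : term) : Npos :=
  match t with
  | Tvar i => e i
  | Tone => one
  | Tmul t1 t2 => gmul G (term_eval G e t1) (term_eval G e t2)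
  end.

Definition update (e : nat -> Npos) (i : nat) (a : Npos) : nat -> Npos :=
  fun j => if j == i then a else e j.

Fixpoint sat (G : GSpace) (phi : formula) (e : nat -> Npos) : Prop :=
  match phi with
  | Feq t1 t2 => term_eval G e t1 = term_eval G e t2
  | Ffalse => False
  | Fnot p => ~ sat G p e
  | Fand p q => sat G p e /\ sat G q e
  | For p q => sat G p e \/ sat G q e
  | Fimp p q => sat G p e -> sat G q e
  | Fforall i p => forall a : Npos, sat G p (update e i a)
  | Fexists i p => exists a : Npos, sat G p (update e i a)
  end.

Fixpoint term_vars (t : term) (i : nat) : bool :=
  match t with
  | Tvar j => j == i
  | Tone => false
  | Tmul t1 t2 => term_vars t1 i || term_vars t2 i
  end.

Fixpoint free_var (phi : formula) (i : nat) : bool :=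
  match phi with
  | Feq t1 t2 => term_vars t1 i || term_vars t2 i
  | Ffalse => false
  | Fnot p => free_var p i
  | Fand p q | For p q | Fimp p q => free_var p i || free_var q i
  | Fforall j p | Fexists j p => (j != i) && free_var p i
  end.

Definition sentence (phi : formula) : Prop := forall i, ~~ free_var phi i.

Definition S_sat (phi : formula) (e : nat -> Npos) : set GSpace :=
  [set G | sat G phi e].

Definition Borel {T : topologicalType} (A : set T) : Prop := <<s (@open T) >> A.

Definition nowhere_dense {T : topologicalType} (A : set T) : Prop :=
  (closure A)° = set0.

Definition meager {T : topologicalType} (A : set T) : Prop :=
  exists F : nat -> set T, (forall n, nowhere_dense (F n)) /\ A `<=` \bigcup_n F n.

Definition comeager {T : topologicalType} (A : set T) : Prop := meager (~` A).

(* Each S_{phi[e]} is Borel: the value of a term at a table depends on finitely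
   many entries, so equations define open sets, while connectives and
   quantifiers over the countable set N are complements and countable unions.
   For the dichotomy, relabelings of N fixing 1 act on \mathcal G by
   homeomorphisms, which preserve S_phi when phi is a sentence.  The action is
   topologically transitive: given tables G1, G2 and finitely many entries of
   each, realise G2 x G1 on N through a bijection N x N -> N sending (a, 1) to a
   for every relevant a; the result extends the entries of G2, and the
   relabeling exchanging the two factors turns it into a table extending those
   of G1.  Borel sets have the Baire property, and a set with the Baire property
   that is invariant under a topologically transitive family of homeomorphisms
   of a space with a countable pi-base is meager or comeager. *)

From Pilot Require Import Defs.
From mathcomp Require Import all_boot all_classical.
From mathcomp Require Import topology function_spaces discrete_topology.
From mathcomp Require Import measurable_structure.
From Stdlib Require Cantor.

Set Implicit Arguments.
Unset Strict Implicit.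
Unset Printing Implicit Defensive.

Local Open Scope classical_set_scope.

Section Baire_category.
Variable T : topologicalType.
Implicit Types A B C U V : set T.

Lemma closed_nowhere_dense C : closed C -> C° = set0 -> nowhere_dense C.
Proof. by move=> /closure_id CE; rewrite /nowhere_dense -CE. Qed.

Lemma nowhere_denseS A B : A `<=` B -> nowhere_dense B -> nowhere_dense A.
Proof.
move=> AB; rewrite /nowhere_dense => B0; apply/seteqP; split => // x.
by rewrite -B0; apply/interiorS/closureS.
Qed.

Lemma nowhere_dense0 : nowhere_dense (@set0 T).
Proof. by rewrite /nowhere_dense closure0 interior0. Qed.

Lemma nowhere_dense_meager A : nowhere_dense A -> meager A.
Proof. by move=> nA; exists (fun=> A); split => // x Ax; exists 0. Qed.

Lemma meagerS A B : A `<=` B -> meager B -> meager A.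
Proof. by move=> AB [F [nF BF]]; exists F; split => //; exact: subset_trans BF. Qed.

Lemma meager_bigcup (F : nat -> set T) : (forall n, meager (F n)) ->
  meager (\bigcup_n F n).
Proof.
move=> /choice[N mN].
exists (fun m => if unpickle m is Some (i, j) then N i j else set0); split.
  by move=> m; case: (unpickle m) => [[i j]|]; [exact: (mN i).1|exact: nowhere_dense0].
move=> x [i _ /(mN i).2 [j _ Nx]].
by exists (pickle (i, j)) => //=; rewrite pickleK.
Qed.

Lemma meager0 : meager (@set0 T).
Proof. exact/nowhere_dense_meager/nowhere_dense0. Qed.

Lemma meagerU A B : meager A -> meager B -> meager (A `|` B).
Proof.
move=> mA mB; rewrite -bigcup2E; apply: meager_bigcup => -[|[|n]] //=.
by apply: meagerS mA; exact: sub0set.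
Qed.

Lemma meager_preimage (h k : T -> T) : continuous h -> continuous k ->
  cancel h k -> cancel k h -> forall A, meager A -> meager (h @^-1` A).
Proof.
move=> ch ck hK kK A [F [nF AF]]; exists (fun n => h @^-1` F n); split; last first.
  by move=> x /AF [n _ Fx]; exists n.
move=> n; apply: (@nowhere_denseS _ (h @^-1` closure (F n))).
  by move=> x Fx; exact: (@subset_closure _ (F n)).
apply: closed_nowhere_dense.
  by apply: preimage_closed => [x _|]; [exact: ch|exact: closed_closure].
apply/seteqP; split => // x hx.
suff: (closure (F n))° (h x) by rewrite (nF n).
have: open (k @^-1` (h @^-1` closure (F n))°).
  exact: ((continuousP k).1 ck _ (@open_interior _ _)).
rewrite openE => /(_ (h x)); rewrite /= hK => /(_ hx).
by apply: filterS => y /interior_subset /=; rewrite kK.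
Qed.

Definition baire_property A := exists U, open U /\ meager ((A `\` U) `|` (U `\` A)).

Lemma open_baire_property U : open U -> baire_property U.
Proof.
by move=> oU; exists U; split => //; apply: (meagerS _ meager0) => x [[]|[]].
Qed.

Lemma baire_propertyC A : baire_property A -> baire_property (~` A).
Proof.
move=> [U [oU mAU]]; pose U' := (~` U)°.
have nB : nowhere_dense (~` U `&` ~` U').
  apply: closed_nowhere_dense.
    by apply: closedI; rewrite closedC //; exact: open_interior.
  apply/seteqP; split => // x ix; have [_] := interior_subset ix; apply.
  by apply: interiorS ix => y [].
exists U'; split; first exact: open_interior.
apply: (meagerS _ (meagerU mAU (nowhere_dense_meager nB))).
move=> x [[nAx nU'x]|[U'x /contrapT Ax]].
  by have [Ux|nUx] := pselect (U x); [left; right|right].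
by left; left; split => //; exact: interior_subset U'x.
Qed.

Lemma baire_property_bigcup (F : nat -> set T) : (forall n, baire_property (F n)) ->
  baire_property (\bigcup_n F n).
Proof.
move=> /choice[U /all_and2[oU mFU]]; exists (\bigcup_n U n); split.
  by apply: bigcup_open => n _; exact: oU.
apply: (meagerS _ (meager_bigcup mFU)).
move=> x [[[n _ Fx] nUx]|[[n _ Ux] nFx]]; exists n => //.
  by left; split => // Unx; apply: nUx; exists n.
by right; split => // Fnx; apply: nFx; exists n.
Qed.

Lemma Borel_baire_property A : Borel A -> baire_property A.
Proof.
apply: smallest_sub; last exact: open_baire_property.
split; first exact/open_baire_property/open0.
  by move=> B /baire_propertyC; rewrite setTD.
exact: baire_property_bigcup.
Qed.

Section zero_one_law.
Variables (I : Type) (h h' : I -> T -> T).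
Hypotheses (h_cont : forall i, continuous (h i)) (h'_cont : forall i, continuous (h' i)).
Hypotheses (hK : forall i, cancel (h i) (h' i)) (h'K : forall i, cancel (h' i) (h i)).
Hypothesis h_transitive : forall U V, open U -> open V -> U !=set0 -> V !=set0 ->
  exists i, h i @^-1` U `&` V !=set0.
Variable B : nat -> set T.
Hypothesis B_open : forall n, open (B n).
Hypothesis B_pi_base : forall V, open V -> V !=set0 -> exists n, B n !=set0 /\ B n `<=` V.

Lemma zero_one_law A : (forall i x, A (h i x) <-> A x) -> baire_property A ->
  meager A \/ meager (~` A).
Proof.
move=> Ainv [U [oU mAU]].
have [[u Uu]|U0] := pselect (U !=set0); last first.
  by left; apply: meagerS mAU => x Ax; left; split => // Ux; apply: U0; exists x.
have [i0 _] := h_transitive oU oU (ex_intro _ u Uu) (ex_intro _ u Uu).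
have /choice[i hi] : forall n, exists i, B n !=set0 -> h i @^-1` U `&` B n !=set0.
  move=> n; have [BnN0|Bn0] := pselect (B n !=set0); last by exists i0.
  by have [j hj] := h_transitive oU (B_open n) (ex_intro _ u Uu) BnN0; exists j.
pose W := \bigcup_n h (i n) @^-1` U.
have nW : nowhere_dense (~` W).
  apply: closed_nowhere_dense.
    by rewrite closedC; apply: bigcup_open => n _; exact: (continuousP _).1 (@h_cont _) _ oU.
  apply/seteqP; split => // x ix.
  have [n [BnN0 Bn_sub]] := B_pi_base (@open_interior _ (~` W)) (ex_intro _ x ix).
  have [y [Uy Bny]] := hi n BnN0.
  by have := interior_subset (Bn_sub y Bny); apply; exists n.
right; apply: (meagerS _ (meagerU (nowhere_dense_meager nW)
  (meager_bigcup (fun n => meager_preimage (@h_cont (i n)) (@h'_cont (i n))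
    (hK (i n)) (h'K (i n)) mAU)))).
move=> x nAx; have [[n _ Ux]|] := pselect (W x); last by left.
by right; exists n => //; right; split => // /Ainv.
Qed.

End zero_one_law.
End Baire_category.

Section sigma_algebra_closure.
Variables (T : Type) (S : set (set T)).
Hypothesis S_sigma : sigma_algebra setT S.

Lemma sigma_algebra_setC A : S A -> S (~` A).
Proof. by rewrite -setTD; case: S_sigma => _ + _; apply. Qed.

Lemma sigma_algebra_setU A B : S A -> S B -> S (A `|` B).
Proof.
move=> SA SB; rewrite -bigcup2E; case: S_sigma => S0 _; apply.
by case=> [|[|n]].
Qed.

Lemma sigma_algebra_setI A B : S A -> S B -> S (A `&` B).
Proof.
move=> SA SB; rewrite -[A `&` B]setCK setCI.
by apply/sigma_algebra_setC/sigma_algebra_setU; exact: sigma_algebra_setC.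
Qed.

End sigma_algebra_closure.

Local Notation table := (Npos * Npos -> Npos).

Definition cylinder (s : seq (Npos * Npos * Npos)) : set table :=
  [set f | all (fun t => f t.1 == t.2) s].

Lemma cylinder_cat s1 s2 : cylinder (s1 ++ s2) = cylinder s1 `&` cylinder s2.
Proof. by apply/seteqP; split => f; rewrite /cylinder /= all_cat => /andP. Qed.

Lemma cylinder_cons t s f : cylinder (t :: s) f <-> f t.1 = t.2 /\ cylinder s f.
Proof. by rewrite /cylinder /=; split => [/andP[/eqP]|[-> ->]] //; rewrite eqxx. Qed.

Lemma open_cylinder s : open (cylinder s : set Tables).
Proof.
elim: s => [|t s IHs].
  by rewrite (_ : cylinder _ = setT); [exact: openT|apply/seteqP].
rewrite (_ : cylinder _ = (fun f : Tables => f t.1) @^-1` [set t.2] `&` cylinder s).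
  apply: openI => //; apply: (continuousP _).1; last exact: discrete_open.
  exact: (@proj_continuous _ (fun=> Ndisc) t.1).
by apply/seteqP; split => f /cylinder_cons.
Qed.

Lemma nbhs_cylinder (f : Tables) (W : set Tables) : nbhs f W ->
  exists2 s, cylinder s f & cylinder s `<=` W.
Proof.
pose F := filter_from [set s | cylinder s f] cylinder.
have F_filter : Filter F.
  apply: filter_from_filter; first by exists [::].
  by move=> s1 s2 s1f s2f; exists (s1 ++ s2); rewrite /= cylinder_cat.
have F_f : F --> f.
  (* [pointwise_cvgP] asks for a topology on the index type; any one will do. *)
  apply/(@pointwise_cvgP (discrete_topology (Npos * Npos)) (discrete_topology Npos)
    _ _ F_filter).
  move=> t A /= ftA.
  exists [:: (t, f t)]; first by apply/cylinder_cons.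
  by move=> g /cylinder_cons[/= -> _]; exact: nbhs_singleton.
by move=> /F_f [s sf sW]; exists s.
Qed.

Definition tab (G : GSpace) : table := set_val G.

Lemma open_tab_cylinder s : open (tab @^-1` cylinder s : set GSpace).
Proof. exact: (continuousP _).1 (@initial_continuous _ _ _) _ (open_cylinder s). Qed.

Lemma nbhs_GSpaceP (G : GSpace) (V : set GSpace) :
  nbhs G V <-> exists2 s, cylinder s (tab G) & tab @^-1` cylinder s `<=` V.
Proof.
split=> [|[s sG sV]]; last first.
  by apply: (filterS sV); apply: open_nbhs_nbhs; split => //; exact: open_tab_cylinder.
case=> _ /= [[W oW <-] WG WV].
have [s sG sW] := nbhs_cylinder (open_nbhs_nbhs (conj oW WG)).
by exists s => // H /sW /WV.
Qed.

Lemma term_eval_locally_constant (G : GSpace) e t : exists2 s, cylinder s (tab G) &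
  forall G', cylinder s (tab G') -> term_eval G' e t = term_eval G e t.
Proof.
elim: t => [i||t1 [s1 s1G IH1] t2 [s2 s2G IH2]]; try by exists [::].
set a := term_eval G e t1; set b := term_eval G e t2.
exists [:: (a, b, tab G (a, b)) & s1 ++ s2].
  by apply/cylinder_cons; rewrite cylinder_cat.
move=> G' /cylinder_cons[/= ab]; rewrite cylinder_cat => -[/IH1 a' /IH2 b'].
by rewrite /= /gmul a' b'.
Qed.

Lemma open_sat_eq t1 t2 e : open (S_sat (Feq t1 t2) e).
Proof.
rewrite openE => G /= t12; apply/nbhs_GSpaceP.
have [s1 s1G IH1] := term_eval_locally_constant G e t1.
have [s2 s2G IH2] := term_eval_locally_constant G e t2.
exists (s1 ++ s2); first by rewrite cylinder_cat.
by move=> G' /=; rewrite cylinder_cat => -[/IH1 + /IH2] /=; rewrite t12 => -> ->.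
Qed.

Definition npos (n : nat) : Npos := exist _ n.+1 isT.
Definition npos_index (a : Npos) : nat := (val a).-1.

Lemma nposK : cancel npos npos_index.
Proof. by []. Qed.

Lemma npos_indexK : cancel npos_index npos.
Proof. by case=> -[|n] // ?; exact: val_inj. Qed.

Lemma bigcup_npos (T : Type) (P : Npos -> set T) :
  [set x | exists a, P a x] = \bigcup_n P (npos n).
Proof.
apply/seteqP; split => x /=; last by case=> n _; exists (npos n).
by case=> a; exists (npos_index a) => //=; rewrite npos_indexK.
Qed.

Lemma sigma_algebra_sat (S : set (set GSpace)) : sigma_algebra setT S ->
  (forall U, open U -> S U) -> forall phi e, S (S_sat phi e).
Proof.
move=> S_sigma S_open.
have S_bigcup (F : nat -> set GSpace) : (forall n, S (F n)) -> S (\bigcup_n F n).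
  by case: S_sigma => _ _; apply.
elim=> [t1 t2||p IHp|p IHp q IHq|p IHp q IHq|p IHp q IHq|i p IHp|i p IHp] e.
- exact/S_open/open_sat_eq.
- by rewrite (_ : S_sat _ e = set0); [case: S_sigma|apply/seteqP; split].
- exact: (sigma_algebra_setC S_sigma (IHp e)).
- exact: (sigma_algebra_setI S_sigma (IHp e) (IHq e)).
- exact: (sigma_algebra_setU S_sigma (IHp e) (IHq e)).
- rewrite (_ : S_sat _ e = ~` S_sat p e `|` S_sat q e).
    exact: (sigma_algebra_setU S_sigma (sigma_algebra_setC S_sigma (IHp e)) (IHq e)).
  apply/seteqP; split => G /=; last by case=> [np /np|].
  by move=> pq; have [/pq|] := pselect (sat G p e); [right|left].
- rewrite (_ : S_sat _ e = ~` [set G | exists a, ~ sat G p (update e i a)]).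
    rewrite bigcup_npos; apply: (sigma_algebra_setC S_sigma); apply: S_bigcup => n.
    exact: (sigma_algebra_setC S_sigma (IHp _)).
  apply/seteqP; split => G /=; first by move=> all_p [a]; apply; exact: all_p.
  by move=> nex a; apply: contrapT => na; apply: nex; exists a.
- have := S_bigcup _ (fun n => IHp (update e i (npos n))).
  by rewrite -(bigcup_npos (fun a => S_sat p (update e i a))).
Qed.

Lemma Borel_sat phi e : Borel (S_sat phi e).
Proof.
by apply: sigma_algebra_sat => [|U]; [exact: smallest_sigma_algebra|exact: sub_sigma_algebra].
Qed.

Record relabeling := Relabeling {
  relabel :> Npos -> Npos;
  relabel_inv : Npos -> Npos;
  relabelK : cancel relabel relabel_inv;
  relabel_invK : cancel relabel_inv relabel;
  relabel1 : relabel Defs.one = Defs.one }.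

Lemma relabel_inv1 (p : relabeling) : relabel_inv p Defs.one = Defs.one.
Proof. by rewrite -{1}(relabel1 p) relabelK. Qed.

Definition relabelV (p : relabeling) : relabeling :=
  Relabeling (relabel_invK p) (relabelK p) (relabel_inv1 p).

Definition transport_table (p : relabeling) (f : table) : table :=
  fun xy => p (f (relabel_inv p xy.1, relabel_inv p xy.2)).

Lemma transport_table_group p f :
  is_group_table f -> is_group_table (transport_table p f).
Proof.
case=> fA f1 fV; split => [x y z|x|x]; rewrite /transport_table /= ?relabelK.
- by rewrite fA.
- by rewrite relabel_inv1; have [-> ->] := f1 (relabel_inv p x); rewrite relabel_invK.
- have [y [xy yx]] := fV (relabel_inv p x); exists (p y).
  by rewrite relabelK xy yx relabel1.
Qed.

Lemma tab_group (G : GSpace) : is_group_table (tab G).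
Proof. exact: set_valP G. Qed.

Definition GSpace_of (f : table) (f_group : is_group_table f) : GSpace :=
  exist _ f (mem_set f_group).

Definition transport (p : relabeling) (G : GSpace) : GSpace :=
  GSpace_of (transport_table_group p (tab_group G)).

Lemma tab_transport p G : tab (transport p G) = transport_table p (tab G).
Proof. by []. Qed.

Lemma transportK p : cancel (transport p) (transport (relabelV p)).
Proof.
move=> G; apply: val_inj; apply: funext => -[x y].
by rewrite /= tab_transport /transport_table /= !relabelK.
Qed.

Lemma transportVK p : cancel (transport (relabelV p)) (transport p).
Proof.
move=> G; apply: val_inj; apply: funext => -[x y].
by rewrite /= tab_transport /transport_table /= !relabel_invK.
Qed.

Definition relabel_entry (q : Npos -> Npos) (t : Npos * Npos * Npos) :=
  (q t.1.1, q t.1.2, q t.2).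

Lemma transport_cylinder p s (G : GSpace) :
  cylinder s (tab (transport p G)) <->
  cylinder (map (relabel_entry (relabel_inv p)) s) (tab G).
Proof.
elim: s => [//|[[x y] z] s IHs] /=; rewrite !cylinder_cons.
split=> -[xyz /IHs sG]; split => //; move: xyz; rewrite tab_transport /transport_table /=.
  by move=> <-; rewrite relabelK.
by move=> ->; rewrite relabel_invK.
Qed.

Lemma transport_continuous p : continuous (transport p).
Proof.
move=> G V /nbhs_GSpaceP[s sG sV]; apply/nbhs_GSpaceP.
move/transport_cylinder: sG => sG; exists (map (relabel_entry (relabel_inv p)) s) => //.
by move=> H /transport_cylinder; exact: sV.
Qed.

Lemma term_eval_transport p G e t :
  term_eval (transport p G) e t = p (term_eval G (relabel_inv p \o e) t).
Proof.
elim: t => [i||t1 IH1 t2 IH2] /=; [by rewrite relabel_invK|by rewrite relabel1|].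
by rewrite /gmul IH1 IH2 -/(tab _) tab_transport /transport_table /= !relabelK.
Qed.

Lemma comp_update (q : Npos -> Npos) e i a : q \o update e i a = update (q \o e) i (q a).
Proof. by apply: funext => j; rewrite /update /=; case: (j == i). Qed.

Lemma sat_transport p G phi e :
  sat (transport p G) phi e <-> sat G phi (relabel_inv p \o e).
Proof.
elim: phi e => [t1 t2||q IH|q IHq r IHr|q IHq r IHr|q IHq r IHr|i q IH|i q IH] e /=.
- by rewrite !term_eval_transport; split => [/(can_inj (relabelK p))|->].
- by [].
- by rewrite IH.
- by rewrite IHq IHr.
- by rewrite IHq IHr.
- by rewrite IHq IHr.
- split=> qe a; last by rewrite IH comp_update.
  by have /IH := qe (p a); rewrite comp_update relabelK.
- split=> -[a]; last by exists (p a); rewrite IH comp_update relabelK.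
  by rewrite IH comp_update; exists (relabel_inv p a).
Qed.

Lemma term_eval_ext G e e' t : (forall i, term_vars t i -> e i = e' i) ->
  term_eval G e t = term_eval G e' t.
Proof.
elim: t => [i||t1 IH1 t2 IH2] /= ee'; [exact/ee'/eqxx|by []|].
by rewrite IH1 ?IH2 // => i ti; apply: ee'; rewrite ti ?orbT.
Qed.

Lemma update_agree (P : nat -> bool) e e' i a :
  (forall j, (i != j) && P j -> e j = e' j) ->
  forall j, P j -> update e i a j = update e' i a j.
Proof.
by move=> ee' j Pj; rewrite /update; case: eqP => // /eqP ji; rewrite ee' // eq_sym ji.
Qed.

Lemma sat_ext G phi e e' : (forall i, free_var phi i -> e i = e' i) ->
  sat G phi e <-> sat G phi e'.
Proof.
elim: phi e e' => [t1 t2||q IH|q IHq r IHr|q IHq r IHr|q IHq r IHr|i q IH|i q IH] e e' /= ee'.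
- by rewrite (@term_eval_ext G e e' t1) ?(@term_eval_ext G e e' t2) // => j tj;
    apply: ee'; rewrite tj ?orbT.
- by [].
- by rewrite (IH e e').
- by rewrite (IHq e e') ?(IHr e e') // => j qj; apply: ee'; rewrite qj ?orbT.
- by rewrite (IHq e e') ?(IHr e e') // => j qj; apply: ee'; rewrite qj ?orbT.
- by rewrite (IHq e e') ?(IHr e e') // => j qj; apply: ee'; rewrite qj ?orbT.
- have qa a := IH _ _ (update_agree a ee').
  by split=> qe a; apply/qa.
- have qa a := IH _ _ (update_agree a ee').
  by split=> -[a /qa]; exists a.
Qed.

Lemma sat_sentence G phi e e' : sentence phi -> sat G phi e <-> sat G phi e'.
Proof.
by move=> phi_sentence; apply: sat_ext => i phi_i; have := phi_sentence i; rewrite phi_i.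
Qed.

Section pinned_bijection.
Variables (A B : eqType) (u : B -> A).
Hypothesis u_inj : injective u.

Definition transp (b c x : B) : B := if x == b then c else if x == c then b else x.

Lemma transp_l b c : transp b c b = c.
Proof. by rewrite /transp eqxx. Qed.

Lemma transp_r b c : transp b c c = b.
Proof. by rewrite /transp; case: eqVneq => [->|]; rewrite ?eqxx. Qed.

Lemma transpK b c : involutive (transp b c).
Proof.
move=> x; have [->|xb] := eqVneq x b; first by rewrite transp_l transp_r.
have [->|xc] := eqVneq x c; first by rewrite transp_r transp_l.
by rewrite /transp (negPf xb) (negPf xc) (negPf xb) (negPf xc).
Qed.

Lemma pinned_bijection (f : A -> B) (s : seq B) : bijective f ->
  exists2 g : A -> B, bijective g & {in s, forall b, g (u b) = b}.
Proof.
move=> f_bij; elim: s => [|b s [g g_bij gs]]; first by exists f.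
pose c := g (u b); exists (transp b c \o g).
  exact/bij_comp/g_bij/inv_bij/transpK.
move=> b' /predU1P[->|b's]; first exact: transp_r.
have [->|b'b] := eqVneq b' b; first exact: transp_r.
rewrite /= gs // /transp (negPf b'b); case: eqVneq => // b'c.
by apply/u_inj/(bij_inj g_bij); rewrite (gs _ b's) b'c.
Qed.

End pinned_bijection.

Lemma npos_pair_bijective : exists f : Npos * Npos -> Npos, bijective f.
Proof.
exists (fun ab => npos (Cantor.to_nat (npos_index ab.1, npos_index ab.2))).
exists (fun c => let mn := Cantor.of_nat (npos_index c) in (npos mn.1, npos mn.2)).
  by move=> [a b]; cbv beta zeta; rewrite nposK Cantor.cancel_of_to !npos_indexK.
by move=> c; cbv beta zeta; rewrite !nposK -surjective_pairing Cantor.cancel_to_of npos_indexK.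
Qed.

Section product_table.
Variables (b : Npos * Npos -> Npos) (b' : Npos -> Npos * Npos).
Hypotheses (bK : cancel b b') (b'K : cancel b' b).
Hypothesis b11 : b (Defs.one, Defs.one) = Defs.one.

Let b'1 : b' Defs.one = (Defs.one, Defs.one).
Proof. by rewrite -{1}b11 bK. Qed.

Definition prod_table (f g : table) : table :=
  fun xy => b (f ((b' xy.1).1, (b' xy.2).1), g ((b' xy.1).2, (b' xy.2).2)).

Lemma prod_table_group f g : is_group_table f -> is_group_table g ->
  is_group_table (prod_table f g).
Proof.
move=> [fA f1 fV] [gA g1 gV]; split => [x y z|x|x]; rewrite /prod_table /= ?bK /=.
- by rewrite fA gA.
- rewrite b'1 /=; have [-> ->] := f1 (b' x).1; have [-> ->] := g1 (b' x).2.
  by rewrite -surjective_pairing b'K.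
- have [y1 [xy1 y1x]] := fV (b' x).1; have [y2 [xy2 y2x]] := gV (b' x).2.
  by exists (b (y1, y2)); rewrite bK /= xy1 xy2 y1x y2x.
Qed.

Let swap_b (x : Npos) : Npos := b ((b' x).2, (b' x).1).

Let swap_bK : involutive swap_b.
Proof. by move=> x; rewrite /swap_b bK /= -surjective_pairing b'K. Qed.

Let swap_b1 : swap_b Defs.one = Defs.one.
Proof. by rewrite /swap_b b'1. Qed.

Definition swap_relabeling : relabeling := Relabeling swap_bK swap_bK swap_b1.

Variable D : seq Npos.
Hypothesis bD : {in D, forall a, b (a, Defs.one) = a}.

Let b'D a : a \in D -> b' a = (a, Defs.one).
Proof. by move=> aD; rewrite -{1}(bD aD) bK. Qed.

Lemma prod_table_pinned f g x y : is_group_table g ->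
  x \in D -> y \in D -> f (x, y) \in D -> prod_table f g (x, y) = f (x, y).
Proof.
move=> [_ g1 _] xD yD fxyD; rewrite /prod_table /= !b'D //=.
by have [->] := g1 Defs.one; rewrite bD.
Qed.

Lemma transport_swap_prod_table f g x y : is_group_table f ->
  x \in D -> y \in D -> g (x, y) \in D ->
  transport_table swap_relabeling (prod_table f g) (x, y) = g (x, y).
Proof.
move=> [_ f1 _] xD yD gxyD.
rewrite /transport_table /prod_table /= /swap_b (b'D xD) (b'D yD) /= !bK /=.
by have [-> _] := f1 Defs.one; rewrite bD.
Qed.

End product_table.

Definition cylinder_support (s : seq (Npos * Npos * Npos)) : seq Npos :=
  flatten [seq [:: t.1.1; t.1.2; t.2] | t <- s].

Lemma cylinder_support_cat s1 s2 :
  cylinder_support (s1 ++ s2) = cylinder_support s1 ++ cylinder_support s2.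
Proof. by rewrite /cylinder_support map_cat flatten_cat. Qed.

Lemma cylinder_agree (D : seq Npos) (f f' : table) s :
  {subset cylinder_support s <= D} ->
  (forall x y, x \in D -> y \in D -> f (x, y) \in D -> f' (x, y) = f (x, y)) ->
  cylinder s f -> cylinder s f'.
Proof.
move=> sD ff'; elim: s sD => [//|[[x y] z] s IHs] sD /cylinder_cons[/= fxy /IHs sf].
apply/cylinder_cons; split => /=; last by apply: sf => a aD; apply: sD; rewrite !inE aD !orbT.
have [xD yD zD] : [/\ x \in D, y \in D & z \in D] by split; apply: sD; rewrite !inE eqxx ?orbT.
by rewrite ff' // fxy.
Qed.

Lemma transport_transitive (U V : set GSpace) : open U -> open V ->
  U !=set0 -> V !=set0 -> exists p, transport p @^-1` U `&` V !=set0.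
Proof.
move=> oU oV [G1 UG1] [G2 VG2].
have /nbhs_GSpaceP[s1 s1G1 s1U] : nbhs G1 U by exact: open_nbhs_nbhs.
have /nbhs_GSpaceP[s2 s2G2 s2V] : nbhs G2 V by exact: open_nbhs_nbhs.
pose D := Defs.one :: cylinder_support (s1 ++ s2).
have [f f_bij] := npos_pair_bijective.
have pair1_inj : injective (fun a : Npos => (a, Defs.one)) by move=> a a' [].
have [b [b' bK b'K] bD] := pinned_bijection pair1_inj D f_bij.
have b11 : b (Defs.one, Defs.one) = Defs.one by apply: bD; exact: mem_head.
have gH := prod_table_group bK b'K b11 (tab_group G2) (tab_group G1).
exists (swap_relabeling bK b'K b11), (GSpace_of gH); split.
  apply: s1U; rewrite /= tab_transport; apply: (@cylinder_agree D) s1G1.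
    by move=> a a1; rewrite /D inE cylinder_support_cat mem_cat a1 orbT.
  move=> x y xD yD xyD.
  exact: (transport_swap_prod_table bK b'K b11 bD (tab_group G2) xD yD xyD).
apply: s2V; apply: (@cylinder_agree D) s2G2.
  by move=> a a2; rewrite /D inE cylinder_support_cat mem_cat a2 !orbT.
by move=> x y xD yD xyD; exact: (prod_table_pinned bK bD (tab_group G1) xD yD xyD).
Qed.

Definition cylinder_enum (n : nat) : set GSpace :=
  if unpickle n is Some s then tab @^-1` cylinder s else set0.

Lemma open_cylinder_enum n : open (cylinder_enum n).
Proof.
by rewrite /cylinder_enum; case: unpickle => [s|]; [exact: open_tab_cylinder|exact: open0].
Qed.

Lemma cylinder_enum_pi_base (V : set GSpace) : open V -> V !=set0 ->
  exists n, cylinder_enum n !=set0 /\ cylinder_enum n `<=` V.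
Proof.
move=> oV [G VG]; have /nbhs_GSpaceP[s sG sV] : nbhs G V by exact: open_nbhs_nbhs.
by exists (pickle s); rewrite /cylinder_enum pickleK; split => //; exists G.
Qed.

Theorem theorem5p8 :
  (forall (phi : formula) (e : nat -> Npos), Borel (S_sat phi e)) /\
  (forall (phi : formula), sentence phi ->
     forall e : nat -> Npos, meager (S_sat phi e) \/ comeager (S_sat phi e)).
Proof.
split=> [phi e|phi phi_sentence e]; first exact: Borel_sat.
have S_invariant p G : S_sat phi e (transport p G) <-> S_sat phi e G.
  by rewrite /S_sat /= sat_transport; exact: sat_sentence.
apply: (zero_one_law (@transport_continuous) (fun p => @transport_continuous (relabelV p))
  transportK transportVK transport_transitive open_cylinder_enum cylinder_enum_pi_base
  S_invariant).
exact: Borel_baire_property (Borel_sat phi e).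
Qed.
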